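(* Let $L_0<L_1$, $\varepsilon>0$, and for $h=\frac{L_1-L_0}{J}$ ($J\in\mathbb{N}^*$) let the time step $l=l(h)>0$ satisfy $l=o(h^{2+\varepsilon})$ as $h\to0$; set $\sigma=\frac{2l}{h^2}$. Let $(\alpha_n)_n$ be a sequence in $[0,1]$ and let $A_n\in\mathcal{M}_{J+1}(\mathbb{C})$ be the tridiagonal matrix (indices $0,\dots,J$) with $A_n(j,j)=\frac{i-4\sigma\alpha_n}{2}$, $A_n(j,j-1)=A_n(j,j+1)=\sigma\alpha_n$, except $A_n(0,1)=A_n(J,J-1)=2\sigma\alpha_n$, other entries zero. Let $\mathcal{L}_{A_n}(X)=A_nX+XA_n^T$. Then there is a constant $C>0$ such that for $h$ small enough, for all $n$ and all $X\in\mathcal{M}_{J+1}(\mathbb{R})$, $$\frac12\|X\|\leq(1-Ch^{\varepsilon})\|X\|\leq\|\mathcal{L}_{A_n}(X)\|\leq(1+Ch^{\varepsilon})\|X\|\leq\frac32\|X\|.$$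
   Context: $\|\cdot\|$ denotes the matrix norm used in the paper (e.g. the Frobenius norm $\|X\|=(\sum_{j,m}|X_{j,m}|^2)^{1/2}$). $A_n$ is the matrix multiplying the new time level in a finite-difference scheme for the 2D NLS equation with Neumann boundary conditions. *)

From HB Require Import structures.
From mathcomp Require Import all_boot all_order all_algebra.
From mathcomp Require Import complex.
From mathcomp Require Import all_classical all_reals all_analysis.
Set Implicit Arguments. Unset Strict Implicit. Unset Printing Implicit Defensive.
Import Order.TTheory GRing.Theory Num.Theory.
Local Open Scope ring_scope.
Local Open Scope complex_scope.

Definition frob (R : realType) (m n : nat) (X : 'M[R[i]]_(m, n)) : R :=
  Num.sqrt (\sum_(j < m) \sum_(k < n) (complex.Re (X j k) ^+ 2 + complex.Im (X j k) ^+ 2)).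

Definition cplx_mx (R : realType) (m n : nat) (X : 'M[R]_(m, n)) : 'M[R[i]]_(m, n) :=
  map_mx (fun x => x%:C) X.

Definition Amat (R : realType) (J : nat) (sigma alpha : R) : 'M[R[i]]_(J.+1) :=
  \matrix_(j < J.+1, k < J.+1)
    if j == k :> nat then ('i - (4 * sigma * alpha)%:C) / 2%:R
    else if (k == j.+1 :> nat) then
      (if j == 0 :> nat then (2 * sigma * alpha)%:C else (sigma * alpha)%:C)
    else if (j == k.+1 :> nat) then
      (if j == J :> nat then (2 * sigma * alpha)%:C else (sigma * alpha)%:C)
    else 0.

Definition LA (R : realType) (n : nat) (A X : 'M[R[i]]_n) : 'M[R[i]]_n :=
  A *m X + X *m A^T.

(* Writing A_n = (i/2) I + sigma alpha_n M with M the real Neumann Laplacian stencil, one gets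
   L_{A_n}(X) = i X + sigma alpha_n (M X + X M^T). For real X the two terms are the imaginary and
   real parts, so ||L_{A_n}(X)||^2 = ||X||^2 + (sigma alpha_n)^2 ||M X + X M^T||^2. The Schur test
   (absolute row and column sums of M are at most 6) bounds the second norm by 12 ||X||, whence
   ||X|| <= ||L_{A_n}(X)|| <= (1 + 12 sigma) ||X||. Finally l = o(h^(2+eps)) makes
   12 sigma = 24 l / h^2 at most h^eps for small h, and h^eps <= 1/2 for small h. *)
From HB Require Import structures.
From mathcomp Require Import all_boot all_order all_algebra.
From mathcomp Require Import complex.
From mathcomp Require Import all_classical all_reals all_analysis.
From mathcomp Require Import ring lra.
Import Order.TTheory GRing.Theory Num.Theory.
Local Open Scope ring_scope.

Section FrobeniusBounds.
Context {R : realType}.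

Definition sqfrob m n (Y : 'M[R]_(m, n)) : R := \sum_(j < m) \sum_(k < n) Y j k ^+ 2.
Arguments sqfrob {m n}.

Lemma sqfrob_ge0 {m n} (Y : 'M[R]_(m, n)) : 0 <= sqfrob Y.
Proof. by apply: sumr_ge0 => j _; apply: sumr_ge0 => k _; exact: sqr_ge0. Qed.

Lemma sqfrob_tr {m n} (Y : 'M[R]_(m, n)) : sqfrob Y^T = sqfrob Y.
Proof.
by rewrite /sqfrob exchange_big; apply: eq_bigr => j _; apply: eq_bigr => k _; rewrite mxE.
Qed.

Lemma sqfrobZ {m n} c (Y : 'M[R]_(m, n)) : sqfrob (c *: Y) = c ^+ 2 * sqfrob Y.
Proof.
rewrite /sqfrob mulr_sumr; apply: eq_bigr => j _; rewrite mulr_sumr.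
by apply: eq_bigr => k _; rewrite mxE exprMn.
Qed.

Lemma sqfrobD_le {m n} (Y Z : 'M[R]_(m, n)) : sqfrob (Y + Z) <= 2 * sqfrob Y + 2 * sqfrob Z.
Proof.
rewrite /sqfrob !mulr_sumr -big_split; apply: ler_sum => j _.
rewrite !mulr_sumr -big_split; apply: ler_sum => k _; rewrite mxE -subr_ge0.
have -> : 2 * Y j k ^+ 2 + 2 * Z j k ^+ 2 - (Y j k + Z j k) ^+ 2 = (Y j k - Z j k) ^+ 2
  by ring.
exact: sqr_ge0.
Qed.

Lemma mul_le_normM_sqr (a b x y : R) :
  2 * (a * x * (b * y)) <= `|a| * `|b| * y ^+ 2 + `|a| * `|b| * x ^+ 2.
Proof.
have ab_le : a * b <= `|a| * `|b| by rewrite -normrM ler_norm.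
have Nab_le : - (a * b) <= `|a| * `|b| by rewrite -normrM -normrN ler_norm.
have h1 : 0 <= (`|a| * `|b| + a * b) * (x - y) ^+ 2
  by apply: mulr_ge0; [lra | exact: sqr_ge0].
have h2 : 0 <= (`|a| * `|b| - a * b) * (x + y) ^+ 2
  by apply: mulr_ge0; [lra | exact: sqr_ge0].
nra.
Qed.

Lemma sqr_sum_le_weighted {n} (a x : 'I_n -> R) :
  (\sum_m a m * x m) ^+ 2 <= (\sum_m `|a m|) * \sum_m `|a m| * x m ^+ 2.
Proof.
pose W := \sum_m \sum_m' `|a m| * `|a m'| * x m' ^+ 2.
have sq_sum : (\sum_m a m * x m) ^+ 2 = \sum_m \sum_m' (a m * x m) * (a m' * x m').
  by rewrite expr2 mulr_suml; apply: eq_bigr => m _; rewrite mulr_sumr.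
have W_def : (\sum_m `|a m|) * \sum_m `|a m| * x m ^+ 2 = W.
  rewrite mulr_suml; apply: eq_bigr => m _; rewrite mulr_sumr.
  by apply: eq_bigr => m' _; rewrite mulrA.
have W_sym : W = \sum_m \sum_m' `|a m| * `|a m'| * x m ^+ 2.
  rewrite /W exchange_big; apply: eq_bigr => m _; apply: eq_bigr => m' _.
  by rewrite (mulrC `|a m'|).
rewrite sq_sum W_def.
suff : 2 * \sum_m \sum_m' (a m * x m) * (a m' * x m') <= W + W by lra.
rewrite {2}W_sym /W -big_split mulr_sumr; apply: ler_sum => m _.
rewrite -big_split mulr_sumr; apply: ler_sum => m' _.
exact: mul_le_normM_sqr.
Qed.

Lemma sqfrob_mulmx_le m n p (M : 'M[R]_(m, n)) (X : 'M[R]_(n, p)) (r c : R) :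
  0 <= r -> (forall j, \sum_l `|M j l| <= r) -> (forall l, \sum_j `|M j l| <= c) ->
  sqfrob (M *m X) <= r * c * sqfrob X.
Proof.
move=> r_ge0 row_le col_le.
apply: (@le_trans _ _ (\sum_j \sum_k r * \sum_l `|M j l| * X l k ^+ 2)).
  apply: ler_sum => j _; apply: ler_sum => k _; rewrite mxE.
  apply: le_trans (sqr_sum_le_weighted (M j) (X^~ k)) _.
  apply: ler_wpM2r; last exact: row_le.
  by apply: sumr_ge0 => l _; apply: mulr_ge0; [exact: normr_ge0 | exact: sqr_ge0].
under eq_bigr do rewrite -mulr_sumr.
rewrite -mulr_sumr -mulrA; apply: ler_wpM2l => //.
under eq_bigr do rewrite exchange_big.
rewrite exchange_big /sqfrob mulr_sumr; apply: ler_sum => l _.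
rewrite exchange_big mulr_sumr; apply: ler_sum => k _.
under eq_bigr do rewrite mulrC.
by rewrite -mulr_sumr mulrC; apply: ler_wpM2r; [exact: sqr_ge0 | exact: col_le].
Qed.

Lemma sqfrob_lyap_le n (M X : 'M[R]_n) (r : R) :
  0 <= r -> (forall j, \sum_l `|M j l| <= r) -> (forall l, \sum_j `|M j l| <= r) ->
  sqfrob (M *m X + X *m M^T) <= 4 * r ^+ 2 * sqfrob X.
Proof.
move=> r_ge0 row_le col_le.
have left_le : sqfrob (M *m X) <= r * r * sqfrob X by exact: sqfrob_mulmx_le.
have right_le : sqfrob (X *m M^T) <= r * r * sqfrob X.
  by rewrite -sqfrob_tr trmx_mul trmxK -(sqfrob_tr X); exact: sqfrob_mulmx_le.
apply: le_trans (sqfrobD_le _ _) _.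
by rewrite expr2; lra.
Qed.

Definition band (j m : nat) : R := ((j == m) + (m == j.+1) + (j == m.+1))%N%:R.

Lemma band_sym j m : band j m = band m j.
Proof. by rewrite /band eq_sym (eq_sym j) addnAC. Qed.

Lemma sum_indicator_le1 n (P : pred 'I_n) c :
  (forall m, P m -> (m : nat) = c) -> \sum_m (P m)%:R <= 1 :> R.
Proof.
move=> P_eq; apply: (@le_trans _ _ (\sum_(m < n) (((m : nat) == c)%:R : R))).
  apply: ler_sum => m _; case Pm: (P m); last by case: (_ == _).
  by rewrite (P_eq m Pm) eqxx.
rewrite (eq_bigr (fun m : 'I_n => if (m : nat) == c then (1 : R) else 0)); last first.
  by move=> m _; case: (_ == _).
by rewrite -big_mkcond (big_ord1_eq _ (fun _ => (1 : R))); case: ifP => _ //; exact: ler01.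
Qed.

Lemma sum_band_le n (j : nat) : \sum_(m < n) band j m <= 3.
Proof.
rewrite /band; under eq_bigr do rewrite !natrD; rewrite !big_split /=.
have diag : \sum_(m < n) (j == m)%:R <= 1 :> R.
  by apply: (@sum_indicator_le1 n _ j) => m /eqP.
have super : \sum_(m < n) (m == j.+1 :> nat)%:R <= 1 :> R.
  by apply: (@sum_indicator_le1 n _ j.+1) => m /eqP.
have sub : \sum_(m < n) (j == m.+1)%:R <= 1 :> R.
  by apply: (@sum_indicator_le1 n _ j.-1) => m /eqP ->.
lra.
Qed.

Lemma band_row_sum_le {n} {M : 'M[R]_n} {c : R} :
  (forall j m, `|M j m| <= c * band j m) -> forall j, \sum_m `|M j m| <= 3 * c.
Proof.
move=> M_le j; have c_ge0 : 0 <= c.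
  have band_jj : band j j = 1 by rewrite /band eqxx !(eqn_leq j) !ltnn ?andbF.
  by have := M_le j j; rewrite band_jj mulr1; exact: le_trans.
apply: le_trans (ler_sum _ (fun m _ => M_le j m)) _.
by rewrite -mulr_sumr mulrC ler_wpM2r // sum_band_le.
Qed.

Lemma band_col_sum_le {n} {M : 'M[R]_n} {c : R} :
  (forall j m, `|M j m| <= c * band j m) -> forall m, \sum_j `|M j m| <= 3 * c.
Proof.
move=> M_le m; rewrite (eq_bigr (fun j => `|M^T m j|)) => [|j _]; last by rewrite mxE.
by apply: band_row_sum_le => j k; rewrite mxE band_sym.
Qed.

End FrobeniusBounds.

Arguments sqfrob {R m n}.

Section LyapunovOperator.
Context {R : realType}.
Local Open Scope complex_scope.

(* The real part of [Amat J sigma alpha], divided by [sigma alpha]: the three-point Laplacian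
   with Neumann boundary conditions imposed by reflection. *)
Definition neumann_lap (J : nat) : 'M[R]_(J.+1) :=
  \matrix_(j < J.+1, k < J.+1)
    if j == k :> nat then -2
    else if k == j.+1 :> nat then (if j == 0 :> nat then 2 else 1)
    else if j == k.+1 :> nat then (if j == J :> nat then 2 else 1)
    else 0.

Lemma normr_neumann_lap_le J (j m : 'I_J.+1) : `|neumann_lap J j m| <= 2 * band j m.
Proof.
rewrite mxE /band !natrD.
case: (j == m :> nat); case: (m == j.+1 :> nat); case: (j == m.+1 :> nat);
  case: (j == 0 :> nat); case: (j == J :> nat);
  rewrite /= ?normrN ?normr0 ?normr1 ?normr_nat; lra.
Qed.

Lemma Amat_decomp J (s a : R) :
  Amat J s a = ('i / 2%:R)%:M + map_mx (real_complex R) ((s * a) *: neumann_lap J).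
Proof.
apply/matrixP => j k; rewrite !mxE.
have [/val_inj->|ne] := eqVneq (j : nat) k.
  by rewrite !eqxx mulr1n !rmorphM rmorphN /= !rmorph_nat; field.
have -> : (j == k) = false by apply/negbTE; apply: contra ne => /eqP->.
rewrite mulr0n add0r.
case: ifP => _; first by case: ifP => _; congr (_%:C); ring.
case: ifP => _; last by rewrite mulr0.
by case: ifP => _; congr (_%:C); ring.
Qed.

Lemma LA_Amat J (s a : R) (X : 'M[R]_(J.+1)) :
  LA (Amat J s a) (cplx_mx X) =
  'i *: cplx_mx X
  + map_mx (real_complex R) ((s * a) *: (neumann_lap J *m X + X *m (neumann_lap J)^T)).
Proof.
rewrite /LA /cplx_mx Amat_decomp -/(map_mx (real_complex R) X).
rewrite linearD /= tr_scalar_mx mulmxDl mulmxDr mul_scalar_mx mul_mx_scalar.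
rewrite !map_mxZ map_mxD !map_mxM -map_trmx.
rewrite -scalemxAl linearZ /= -scalemxAr scalerDr addrACA -scalerDl.
by congr (_ *: _ + _); field.
Qed.

Lemma frob_cplx_mx m n (X : 'M[R]_(m, n)) : frob (cplx_mx X) = Num.sqrt (sqfrob X).
Proof.
rewrite /frob /sqfrob; congr Num.sqrt; apply: eq_bigr => j _; apply: eq_bigr => k _.
by rewrite !mxE /= expr0n addr0.
Qed.

(* For real [X], [i X] and the real matrix [sigma alpha (M X + X M^T)] are orthogonal. *)
Lemma frob_LA_Amat J (s a : R) (X : 'M[R]_(J.+1)) :
  frob (LA (Amat J s a) (cplx_mx X)) =
  Num.sqrt (sqfrob ((s * a) *: (neumann_lap J *m X + X *m (neumann_lap J)^T)) + sqfrob X).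
Proof.
rewrite LA_Amat /frob /sqfrob -big_split; congr Num.sqrt; apply: eq_bigr => j _.
by rewrite -big_split; apply: eq_bigr => k _; rewrite !mxE /=; ring.
Qed.

Lemma frob_LA_Amat_bounds J {s a : R} (X : 'M[R]_(J.+1)) :
  0 <= s -> 0 <= a <= 1 ->
  frob (cplx_mx X) <= frob (LA (Amat J s a) (cplx_mx X)) <= (1 + 12 * s) * frob (cplx_mx X).
Proof.
move=> s_ge0 /andP[a_ge0 a_le1].
rewrite frob_LA_Amat frob_cplx_mx.
set S := sqfrob X; set B := sqfrob _.
have S_ge0 : 0 <= S := sqfrob_ge0 X.
have B_ge0 : 0 <= B := sqfrob_ge0 _.
have B_le : B <= 144 * s ^+ 2 * S.
  rewrite /B sqfrobZ.
  have lap_le := @sqfrob_lyap_le R _ (neumann_lap J) X (3 * 2) ltac:(lra)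
    (band_row_sum_le (@normr_neumann_lap_le J)) (band_col_sum_le (@normr_neumann_lap_le J)).
  have sa_le : (s * a) ^+ 2 <= s ^+ 2.
    by rewrite exprMn -[leRHS]mulr1 ler_wpM2l ?sqr_ge0 ?exprn_ile1.
  have -> : 144 * s ^+ 2 * S = s ^+ 2 * (4 * (3 * 2) ^+ 2 * S) by ring.
  exact: ler_pM (sqr_ge0 _) (sqfrob_ge0 _) sa_le lap_le.
apply/andP; split; first by rewrite ler_sqrt; lra.
rewrite -[1 + 12 * s]ger0_norm; last lra.
rewrite -sqrtr_sqr -sqrtrM ?sqr_ge0 // ler_sqrt; last by apply: mulr_ge0 => //; exact: sqr_ge0.
have : 0 <= s * S by exact: mulr_ge0.
nra.
Qed.

End LyapunovOperator.

Lemma powR_le_near0 {R : realType} {eps c : R} : 0 < eps -> 0 < c ->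
  exists b : R, 0 < b /\ forall h : R, 0 <= h -> h < b -> h `^ eps <= c.
Proof.
move=> eps_gt0 c_gt0; exists (c `^ eps^-1); split; first exact: powR_gt0.
move=> h h_ge0 h_lt.
have -> : c = (c `^ eps^-1) `^ eps by rewrite -powRrM mulVf ?gt_eqF // powRr1 // ltW.
apply: ge0_ler_powR; rewrite ?nnegrE ?powR_ge0 //; exact: ltW.
Qed.

Lemma mesh_ratio_le {R : realType} {eps : R} {l : R -> R} :
  (forall delta : R, 0 < delta -> exists eta : R, 0 < eta /\
     forall h : R, 0 < h -> h < eta -> `|l h| <= delta * h `^ (2 + eps)) ->
  exists eta : R, 0 < eta /\
    forall h : R, 0 < h -> h < eta -> 12 * (2 * l h / h ^+ 2) <= h `^ eps.
Proof.
move=> l_small; have [eta [eta_gt0 l_le]] := l_small (1 / 24) ltac:(lra).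
exists eta; split=> // h h_gt0 h_lt.
have h2_gt0 : 0 < h ^+ 2 by exact: exprn_gt0.
have := l_le h h_gt0 h_lt.
rewrite powRD ?(gt_eqF h_gt0) ?implybT // powR_mulrn ?(ltW h_gt0) // => lh_le.
rewrite !mulrA ler_pdivrMr //.
have := ler_norm (l h); lra.
Qed.

Theorem lemma4 (R : realType) (L0 L1 eps : R) (l : R -> R) (alpha : nat -> R) :
  L0 < L1 -> 0 < eps ->
  (forall h : R, 0 < h -> 0 < l h) ->
  (* l = o(h^(2+eps)) as h -> 0+ *)
  (forall delta : R, 0 < delta -> exists eta : R, 0 < eta /\
     forall h : R, 0 < h -> h < eta -> `|l h| <= delta * h `^ (2 + eps)) ->
  (forall n, 0 <= alpha n <= 1) ->
  exists C : R, 0 < C /\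
    exists h0 : R, 0 < h0 /\
      forall J : nat, (0 < J)%N ->
        let h := (L1 - L0) / J%:R in
        h < h0 ->
        let sigma := 2 * l h / h ^+ 2 in
        forall (n : nat) (X : 'M[R]_(J.+1)),
          let nX := frob (cplx_mx X) in
          let nL := frob (LA (Amat J sigma (alpha n)) (cplx_mx X)) in
          [/\ 1 / 2 * nX <= (1 - C * h `^ eps) * nX,
              (1 - C * h `^ eps) * nX <= nL,
              nL <= (1 + C * h `^ eps) * nX &
              (1 + C * h `^ eps) * nX <= 3 / 2 * nX].
Proof.
move=> L0_lt eps_gt0 l_gt0 l_small alpha01.
have [eta [eta_gt0 sigma_le]] := mesh_ratio_le l_small.
have half_gt0 : 0 < 1 / 2 :> R by lra.
have [b [b_gt0 pow_le]] := powR_le_near0 eps_gt0 half_gt0.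
exists 1; split; first lra.
exists (Order.min eta b); split; first by rewrite lt_min eta_gt0 b_gt0.
move=> J J_gt0 h; rewrite lt_min => /andP[h_lt_eta h_lt_b] sigma n X nX nL.
have h_gt0 : 0 < h by apply: divr_gt0; rewrite ?ltr0n ?subr_gt0.
have sigma_ge0 : 0 <= sigma by apply: divr_ge0; [have := l_gt0 h h_gt0; lra | exact: sqr_ge0].
have /andP[nX_le_nL nL_le] := frob_LA_Amat_bounds J X sigma_ge0 (alpha01 n).
have t_le : h `^ eps <= 1 / 2 := pow_le h (ltW h_gt0) h_lt_b.
have sigma_le_t : 12 * sigma <= h `^ eps := sigma_le h h_gt0 h_lt_eta.
have t_ge0 : 0 <= h `^ eps := powR_ge0 h eps.
have nX_ge0 : 0 <= nX by rewrite /nX frob_cplx_mx sqrtr_ge0.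
rewrite mul1r; split.
- by apply: ler_wpM2r => //; lra.
- by apply: le_trans nX_le_nL; rewrite ler_piMl //; lra.
- by apply: (le_trans nL_le); apply: ler_wpM2r => //; lra.
- by apply: ler_wpM2r => //; lra.
Qed.
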